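(* Let $(G,\cdot)$ be a WIPL with identity $e$, let $(H,\circ)$ be a WIPL with identity $e'$, and let $(A,B,C)$ be an isotopism from $(G,\cdot)$ to $(H,\circ)$. Put $a=e'A^{-1}$ and $b=e'B^{-1}$. Assume that either $(x\cdot y)^\rho=x^\rho\cdot y^\lambda$ for all $x,y\in G$, or $(x\cdot y)^\lambda=x^\lambda\cdot y^\rho$ for all $x,y\in G$. Then $C$ is an isomorphism from $(G,\cdot)$ onto $(H,\circ)$ if and only if $(L_b,R_a,I)\in AUT(G,\cdot)$. Moreover, in that case $(G,\cdot)$ and $(H,\circ)$ are (isomorphic) cross inverse property loops, $R_aL_b=I$ and $b\cdot a=e$.
   Context: Maps are written on the right of their arguments ($xU$) and composed left to right: $UV$ means first apply $U$, then $V$; $I$ is the identity map. For a loop $(L,\cdot)$ with identity $e$, $x^\rho$ and $x^\lambda$ denote the right and left inverses of $x$ ($x x^\rho=e=x^\lambda x$), and $J_\rho:x\mapsto x^\rho$, $J_\lambda:x\mapsto x^\lambda$, $L_x:y\mapsto xy$, $R_x:y\mapsto yx$. $L$ is a weak inverse property loop (WIPL) if $xy\cdot z=e$ implies $x\cdot yz=e$ for all $x,y,z\in L$; it is a cross inverse property loop (CIPL) if $xy\cdot x^\rho=y$ for all $x,y\in L$. A triple $(U,V,W)$ of bijections $G\to H$ between loops $(G,\cdot)$ and $(H,\circ)$ is an isotopism if $xU\circ yV=(x\cdot y)W$ for all $x,y\in G$; an autotopism is an isotopism of a loop to itself, and $AUT(G,\cdot)$ denotes the group of autotopisms under componentwise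 composition. *)

Definition is_bij {X Y : Type} (f : X -> Y) : Prop :=
  exists g : Y -> X, (forall x, g (f x) = x) /\ (forall y, f (g y) = y).

Definition is_loop {L : Type} (mul : L -> L -> L) (e : L) : Prop :=
  (forall x, mul e x = x /\ mul x e = x) /\
  (forall a b, exists x, mul a x = b /\ forall x', mul a x' = b -> x' = x) /\
  (forall a b, exists y, mul y a = b /\ forall y', mul y' a = b -> y' = y).

Definition is_WIPL {L : Type} (mul : L -> L -> L) (e : L) : Prop :=
  is_loop mul e /\
  forall x y z, mul (mul x y) z = e -> mul x (mul y z) = e.

(* cross inverse property: xy . x^rho = y, where x^rho is the (unique) r with x r = e *)
Definition is_CIPL {L : Type} (mul : L -> L -> L) (e : L) : Prop :=
  is_loop mul e /\
  forall x xr, mul x xr = e -> forall y, mul (mul x y) xr = y.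

(* (x.y)^rho = x^rho . y^lambda for all x, y  (x x^rho = e, y^lambda y = e) *)
Definition rho_of_prod_cond {L : Type} (mul : L -> L -> L) (e : L) : Prop :=
  forall x y xr yl, mul x xr = e -> mul yl y = e ->
    mul (mul x y) (mul xr yl) = e.

(* (x.y)^lambda = x^lambda . y^rho for all x, y *)
Definition lambda_of_prod_cond {L : Type} (mul : L -> L -> L) (e : L) : Prop :=
  forall x y xl yr, mul xl x = e -> mul y yr = e ->
    mul (mul xl yr) (mul x y) = e.

Definition is_isotopism {G H : Type} (mulG : G -> G -> G) (mulH : H -> H -> H)
  (U V W : G -> H) : Prop :=
  is_bij U /\ is_bij V /\ is_bij W /\
  forall x y, mulH (U x) (V y) = W (mulG x y).

Definition is_autotopism {G : Type} (mulG : G -> G -> G) (U V W : G -> G) : Prop :=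
  is_isotopism mulG mulG U V W.

Definition is_isomorphism {G H : Type} (mulG : G -> G -> G) (mulH : H -> H -> H)
  (C : G -> H) : Prop :=
  is_bij C /\ forall x y, C (mulG x y) = mulH (C x) (C y).


(* Proof plan.
   1. In a WIPL satisfying (xy)^rho = x^rho y^lambda or (xy)^lambda = x^lambda y^rho,
      the identity x^rho (z x) = z holds, and this identity implies the cross inverse
      property; so (G,.) is a CIPL.
   2. Call (c,d) a neutral pair of a loop if (x c)(d y) = x y for all x, y.  In any
      loop (c,d) neutral forces R_c R_d = I and L_d L_c = I, and (d,c) is neutral too.
   3. Since xA = (x b)C and yB = (a y)C, the map C is an isomorphism iff (b,a) is a
      neutral pair of (G,.).
   4. In a CIPL with the weak inverse property, (b,a) is neutral iff (L_b,R_a,I) is an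
      autotopism: one direction is a rewriting with CIP, the other shows that a lies
      in the nucleus and commutes with every element, whence (u a)(b v) = u v.
   5. An isomorphism transports the CIP from (G,.) to (H,o); and b a = e together with
      CIP gives b (x a) = x, i.e. R_a L_b = I. *)

Section Loop.
Context {L : Type} (mul : L -> L -> L) (e : L) (loop : is_loop mul e).

Lemma mul_1l x : mul e x = x.
Proof. apply (proj1 loop). Qed.

Lemma mul_1r x : mul x e = x.
Proof. apply (proj1 loop). Qed.

Lemma left_solvable a c : exists x, mul a x = c.
Proof.
  destruct loop as [_ [solve _]]. destruct (solve a c) as [x [Hx _]]. eauto.
Qed.

Lemma right_solvable a c : exists y, mul y a = c.
Proof.
  destruct loop as [_ [_ solve]]. destruct (solve a c) as [y [Hy _]]. eauto.
Qed.

Lemma mul_cancel_l a x y : mul a x = mul a y -> x = y.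
Proof.
  intro E. destruct loop as [_ [solve _]].
  destruct (solve a (mul a x)) as [x0 [_ uniq]].
  rewrite (uniq x eq_refl). symmetry. apply uniq. symmetry; exact E.
Qed.

Lemma mul_cancel_r a x y : mul x a = mul y a -> x = y.
Proof.
  intro E. destruct loop as [_ [_ solve]].
  destruct (solve a (mul x a)) as [x0 [_ uniq]].
  rewrite (uniq x eq_refl). symmetry. apply uniq. symmetry; exact E.
Qed.

Definition neutral_pair (c d : L) : Prop :=
  forall x y, mul (mul x c) (mul d y) = mul x y.

Section NeutralPair.
Variables (c d : L).
Hypothesis neutral : neutral_pair c d.

Lemma neutral_pair_right x : mul (mul x c) d = x.
Proof. specialize (neutral x e). now rewrite !mul_1r in neutral. Qed.

Lemma neutral_pair_left y : mul c (mul d y) = y.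
Proof. specialize (neutral e y). now rewrite !mul_1l in neutral. Qed.

(* R_c and R_d (resp. L_d and L_c) are mutually inverse, so the pair can be swapped. *)
Lemma neutral_pair_sym : neutral_pair d c.
Proof.
  assert (right : forall w, mul (mul w d) c = w).
  { intro w. apply (mul_cancel_r d). apply neutral_pair_right. }
  assert (left : forall w, mul d (mul c w) = w).
  { intro w. apply (mul_cancel_l c). apply neutral_pair_left. }
  intros u v. rewrite <- (neutral (mul u d) (mul c v)). now rewrite right, left.
Qed.
End NeutralPair.

Definition cross_inverse_alt : Prop :=
  forall y yr z, mul y yr = e -> mul yr (mul z y) = z.

Lemma cipl_of_cross_inverse_alt : cross_inverse_alt -> is_CIPL mul e.
Proof.
  intro alt. split; [exact loop|]. intros x xr Hx w.
  assert (Hxr : mul xr x = e).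
  { specialize (alt x xr e Hx). now rewrite mul_1l in alt. }
  destruct (right_solvable xr w) as [t Ht].
  assert (E : mul x w = t). { rewrite <- Ht. apply alt; exact Hxr. }
  now rewrite E.
Qed.

Hypothesis wip : forall x y z, mul (mul x y) z = e -> mul x (mul y z) = e.

Lemma cipl_of_inverse_of_product :
  rho_of_prod_cond mul e \/ lambda_of_prod_cond mul e -> is_CIPL mul e.
Proof.
  intro cond. apply cipl_of_cross_inverse_alt. intros y yr z Hy.
  destruct (right_solvable z e) as [zl Hz].
  apply (mul_cancel_l zl). rewrite Hz. apply wip.
  destruct cond as [rho | lambda].
  - exact (rho zl yr z y Hz Hy).
  - exact (lambda z y zl yr Hz Hy).
Qed.

Section CrossInverse.
Hypothesis cip : is_CIPL mul e.

Lemma cip_right x xr y : mul x xr = e -> mul (mul x y) xr = y.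
Proof. intro H. apply (proj2 cip); exact H. Qed.

Lemma cip_left x xr y : mul x xr = e -> mul x (mul y xr) = y.
Proof.
  intro H. destruct (left_solvable x y) as [w Hw].
  rewrite <- Hw. now rewrite cip_right.
Qed.

Lemma inverse_of_product x xr y yr :
  mul x xr = e -> mul y yr = e -> mul (mul x y) (mul xr yr) = e.
Proof.
  intros Hx Hy. destruct (left_solvable (mul x y) e) as [z Hxy].
  assert (Ez : mul y z = xr).
  { apply (mul_cancel_l x). rewrite Hx. now apply wip. }
  assert (E : z = mul xr yr).
  { apply (mul_cancel_l y). rewrite Ez. symmetry. now apply cip_left. }
  now rewrite <- E.
Qed.

Section Autotopism.
Variables (b a : L).

(* A neutral pair (b,a) yields the autotopism (L_b, R_a, I), whose components
   are inverted by L_a and R_b. *)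
Lemma neutral_pair_autotopism :
  neutral_pair b a ->
  is_autotopism mul (fun x => mul b x) (fun x => mul x a) (fun x => x).
Proof.
  intro neutral. pose proof (neutral_pair_sym _ _ neutral) as neutral'.
  assert (ba : mul b a = e).
  { rewrite <- (mul_1r a). apply neutral_pair_left; exact neutral. }
  split; [exists (fun x => mul a x); split; intro; apply neutral_pair_left; assumption|].
  split; [exists (fun x => mul x b); split; intro; apply neutral_pair_right; assumption|].
  split; [exists (fun x => x); split; reflexivity|].
  intros x y.
  specialize (neutral (mul (mul b x) a) (mul b (mul y a))).
  rewrite (neutral_pair_right _ _ neutral'), (neutral_pair_left _ _ neutral') in neutral.
  rewrite neutral, (cip_right b a x ba). now rewrite (cip_left b a y ba).
Qed.

Hypothesis autotopism : forall x y, mul (mul b x) (mul y a) = mul x y.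

Lemma autotopism_inverse : mul b a = e.
Proof.
  specialize (autotopism e e). now rewrite mul_1r, !mul_1l in autotopism.
Qed.

Lemma autotopism_nucleus_right p q : mul p (mul a q) = mul (mul p q) a.
Proof.
  destruct (right_solvable q e) as [x Hx].
  pose proof (inverse_of_product b a x q autotopism_inverse Hx) as inv.
  pose proof (cip_right _ _ (mul (mul p q) a) inv) as h.
  rewrite autotopism, (cip_left x q p Hx) in h. exact h.
Qed.

(* a associates on the left as well: (p a) q = a (p q); with q = e, a is central. *)
Lemma autotopism_nucleus_left p q : mul (mul p a) q = mul a (mul p q).
Proof.
  destruct (right_solvable q e) as [x Hx].
  pose proof (cip_right x q (mul a (mul p q)) Hx) as h.
  rewrite autotopism_nucleus_right, (cip_left x q p Hx) in h. exact h.
Qed.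

(* Conversely the autotopism makes (b,a) neutral, as (u a)(b v) = a (u (b v)) = u v. *)
Lemma autotopism_neutral_pair : neutral_pair b a.
Proof.
  apply neutral_pair_sym.
  assert (comm : forall p, mul p a = mul a p).
  { intro p. pose proof (autotopism_nucleus_left p e) as h. now rewrite !mul_1r in h. }
  assert (inv : forall q, mul b (mul a q) = q).
  { intro q. rewrite autotopism_nucleus_right. apply cip_right, autotopism_inverse. }
  intros u v.
  rewrite autotopism_nucleus_left, <- comm, <- autotopism_nucleus_right.
  f_equal. apply (mul_cancel_l b). apply inv.
Qed.
End Autotopism.
End CrossInverse.
End Loop.

Section Isotopy.
Context {G H : Type} (mulG : G -> G -> G) (e : G) (mulH : H -> H -> H) (e' : H).
Hypotheses (loopG : is_loop mulG e) (loopH : is_loop mulH e').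

Lemma isomorphism_identity (C : G -> H) :
  is_isomorphism mulG mulH C -> C e = e'.
Proof.
  intros [_ hom]. apply (mul_cancel_l mulH e' loopH (C e)).
  now rewrite <- hom, (mul_1r mulG e loopG), (mul_1r mulH e' loopH).
Qed.

Lemma cipl_of_isomorphism (C : G -> H) :
  is_isomorphism mulG mulH C -> is_CIPL mulG e -> is_CIPL mulH e'.
Proof.
  intros iso cipG. pose proof (isomorphism_identity C iso) as Ce.
  destruct iso as [[g [gC Cg]] hom]. split; [exact loopH|].
  intros x xr Hx y. rewrite <- (Cg x), <- (Cg xr), <- (Cg y) in *.
  rewrite <- hom, <- Ce in Hx. apply (f_equal g) in Hx. rewrite !gC in Hx.
  rewrite <- !hom. f_equal. now apply (cip_right mulG e cipG).
Qed.

Lemma isomorphism_iff_neutral_pair (A B C : G -> H) (a b : G) :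
  is_isotopism mulG mulH A B C -> A a = e' -> B b = e' ->
  (is_isomorphism mulG mulH C <-> neutral_pair mulG b a).
Proof.
  intros [_ [_ [bijC hom]]] ha hb.
  assert (CA : forall x, C (mulG x b) = A x).
  { intro x. rewrite <- hom, hb. apply (mul_1r mulH e' loopH). }
  assert (CB : forall y, C (mulG a y) = B y).
  { intro y. rewrite <- hom, ha. apply (mul_1l mulH e' loopH). }
  destruct bijC as [g [gC Cg]]. split.
  - intros [_ homC] x y.
    rewrite <- (gC (mulG (mulG x b) (mulG a y))), <- (gC (mulG x y)).
    now rewrite homC, CA, CB, hom.
  - intro neutral. pose proof (neutral_pair_sym mulG e loopG _ _ neutral) as neutral'.
    split; [exists g; split; assumption|]. intros u v.
    rewrite <- (neutral' u v), <- hom, <- CA, <- CB.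
    now rewrite (neutral_pair_right mulG e loopG _ _ neutral'),
                (neutral_pair_left mulG e loopG _ _ neutral').
Qed.
End Isotopy.

Theorem mainTheorem4 (G H : Type) (mulG : G -> G -> G) (e : G)
  (mulH : H -> H -> H) (e' : H)
  (hG : is_WIPL mulG e) (hH : is_WIPL mulH e')
  (A B C : G -> H) (hiso : is_isotopism mulG mulH A B C)
  (a b : G) (ha : A a = e') (hb : B b = e')
  (hcond : rho_of_prod_cond mulG e \/ lambda_of_prod_cond mulG e) :
  (is_isomorphism mulG mulH C <->
     is_autotopism mulG (fun x => mulG b x) (fun x => mulG x a) (fun x => x)) /\
  (is_isomorphism mulG mulH C ->
     is_CIPL mulG e /\ is_CIPL mulH e' /\
     (forall x, mulG b (mulG x a) = x) /\ mulG b a = e).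
Proof.
  destruct hG as [loopG wipG], hH as [loopH _].
  pose proof (cipl_of_inverse_of_product mulG e loopG wipG hcond) as cipG.
  pose proof (isomorphism_iff_neutral_pair mulG e mulH e' loopG loopH A B C a b hiso ha hb)
    as iso_neutral.
  assert (neutral_autotopism : neutral_pair mulG b a <->
            is_autotopism mulG (fun x => mulG b x) (fun x => mulG x a) (fun x => x)).
  { split.
    - apply (neutral_pair_autotopism mulG e loopG cipG).
    - intros [_ [_ [_ at_eq]]].
      exact (autotopism_neutral_pair mulG e loopG wipG cipG b a at_eq). }
  split.
  { split; intro h.
    - apply neutral_autotopism, iso_neutral, h.
    - apply iso_neutral, neutral_autotopism, h. }
  intro iso. pose proof (proj1 iso_neutral iso) as neutral.
  assert (ba : mulG b a = e) by
    (apply (autotopism_inverse mulG e loopG b a), neutral_autotopism, neutral).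
  split; [exact cipG|].
  split; [exact (cipl_of_isomorphism mulG e mulH e' loopG loopH C iso cipG)|].
  split; [|exact ba].
  intro x. exact (cip_left mulG e loopG cipG b a x ba).
Qed.
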